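(* The group $\mathrm{GL}_n(\mathbb C)\times\mathrm{GL}_n(\mathbb C)$ has $2^{n-1}$ orbits on $\mathrm{Hinge}_n$. These orbits are enumerated by the number $k\in\{1,\dots,n\}$ of terms and the positive integers $\alpha_1=\mathrm{rk}\,P_1,\dots,\alpha_k=\mathrm{rk}\,P_k$, where $\alpha_1+\dots+\alpha_k=n$: two hinges lie in the same orbit iff these data coincide, and every such tuple $(\alpha_1,\dots,\alpha_k)$ occurs.
   Context: Let $V=\mathbb C^n$. For a linear subspace (linear relation) $P\subset V\oplus V$: $\mathrm{Ker}\,P=\{v: v\oplus0\in P\}$, $\mathrm{Dom}\,P$ and $\mathrm{Im}\,P$ are the projections of $P$ to the first and second summands, $\mathrm{Indef}\,P=\{w:0\oplus w\in P\}$, $\mathrm{rk}\,P=\dim\mathrm{Dom}\,P-\dim\mathrm{Ker}\,P$. A hinge is a sequence $(P_1,\dots,P_k)$ of $n$-dimensional subspaces of $V\oplus V$ such that $\mathrm{Ker}\,P_j=\mathrm{Dom}\,P_{j+1}$ and $\mathrm{Im}\,P_j=\mathrm{Indef}\,P_{j+1}$ for $1\le j\le k-1$, $\mathrm{Dom}\,P_1=V$, $\mathrm{Im}\,P_k=V$, and $\mathrm{rk}\,P_j>0$ for all $j$. $\mathrm{Hinge}_n$ is the set of all hinges. $(g_1,g_2)\in\mathrm{GL}_n(\mathbb C)\times\mathrm{GL}_n(\mathbb C)$ acts on $V\oplus V$ by $v\oplus w\mapsto g_1v\oplus g_2w$, and on hinges termwise. *)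

From mathcomp Require Import all_boot all_algebra complex.
From mathcomp Require Import Rstruct.
Set Implicit Arguments. Unset Strict Implicit. Unset Printing Implicit Defensive.
Import GRing.Theory.
Local Open Scope ring_scope.

Definition C : fieldType := (Rdefinitions.R)[i].

(* V = C^n is represented by row vectors 'rV[C]_n; V (+) V by 'rV[C]_(n+n),
   the first n coordinates being the first summand.  A linear subspace of
   V (+) V is represented (mxalgebra style) as the row space of a square
   matrix P : 'M[C]_(n+n); subspaces are compared with (_ == _)%MS. *)
Notation subsp n := 'M[C]_(n + n).

Definition DomM n (P : subsp n) : 'M[C]_(n + n, n) := lsubmx P.
Definition ImM n (P : subsp n) : 'M[C]_(n + n, n) := rsubmx P.
(* Ker P = {v | v (+) 0 \in P}: the first components of the elements of P
   whose second component vanishes. *)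
Definition KerM n (P : subsp n) : 'M[C]_(n + n, n) :=
  kermx (rsubmx P) *m lsubmx P.
(* Indef P = {w | 0 (+) w \in P}. *)
Definition IndefM n (P : subsp n) : 'M[C]_(n + n, n) :=
  kermx (lsubmx P) *m rsubmx P.

Definition rk n (P : subsp n) : nat := (\rank (DomM P) - \rank (KerM P))%N.

Lemma KerM_spec n (P : subsp n) (v : 'rV[C]_n) :
  (v <= KerM P)%MS = (row_mx v 0 <= P)%MS.
Proof.
apply/idP/idP.
  case/submxP=> u ->; apply/submxP; exists (u *m kermx (rsubmx P)).
  rewrite -{3}(hsubmxK P) mul_mx_row -(mulmxA u (kermx _) (rsubmx P)).
  by rewrite mulmx_ker mulmx0 /KerM mulmxA.
case/submxP=> u Hu; rewrite -{1}(hsubmxK P) mul_mx_row in Hu.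
case/eq_row_mx: Hu => Hl Hr.
have /sub_kermxP : u *m rsubmx P = 0 by rewrite -Hr.
case/submxP=> w Hw; apply/submxP; exists w.
by rewrite Hl Hw /KerM mulmxA.
Qed.

Lemma IndefM_spec n (P : subsp n) (w : 'rV[C]_n) :
  (w <= IndefM P)%MS = (row_mx 0 w <= P)%MS.
Proof.
apply/idP/idP.
  case/submxP=> u ->; apply/submxP; exists (u *m kermx (lsubmx P)).
  rewrite -{3}(hsubmxK P) mul_mx_row -(mulmxA u (kermx _) (lsubmx P)).
  by rewrite mulmx_ker mulmx0 /IndefM mulmxA.
case/submxP=> u Hu; rewrite -{1}(hsubmxK P) mul_mx_row in Hu.
case/eq_row_mx: Hu => Hl Hr.
have /sub_kermxP : u *m lsubmx P = 0 by rewrite -Hl.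
case/submxP=> z Hz; apply/submxP; exists z.
by rewrite Hr Hz /IndefM mulmxA.
Qed.

Lemma DomM_spec n (P : subsp n) (v : 'rV[C]_n) :
  (v <= DomM P)%MS <-> exists w : 'rV[C]_n, (row_mx v w <= P)%MS.
Proof.
split.
  case/submxP=> u ->; exists (u *m rsubmx P); apply/submxP; exists u.
  by rewrite -{3}(hsubmxK P) mul_mx_row.
case=> w /submxP [u Hu]; apply/submxP; exists u.
by rewrite -{1}(hsubmxK P) mul_mx_row in Hu; case/eq_row_mx: Hu.
Qed.

Lemma ImM_spec n (P : subsp n) (w : 'rV[C]_n) :
  (w <= ImM P)%MS <-> exists v : 'rV[C]_n, (row_mx v w <= P)%MS.
Proof.
split.
  case/submxP=> u ->; exists (u *m lsubmx P); apply/submxP; exists u.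
  by rewrite -{3}(hsubmxK P) mul_mx_row.
case=> v /submxP [u Hu]; apply/submxP; exists u.
by rewrite -{1}(hsubmxK P) mul_mx_row in Hu; case/eq_row_mx: Hu.
Qed.

Definition is_hinge n (s : seq (subsp n)) : Prop :=
  [/\ s != [::],
      (forall P, P \in s -> \rank P = n /\ (0 < rk P)%N),
      (forall j, (j.+1 < size s)%N ->
          (KerM (nth 0 s j) == DomM (nth 0 s j.+1))%MS /\
          (ImM (nth 0 s j) == IndefM (nth 0 s j.+1))%MS),
      row_full (DomM (head 0 s)) &
      row_full (ImM (last 0 s))].

(* Action of (g1, g2) on V (+) V: v (+) w |-> v g1 (+) w g2 (row vectors, so
   the matrices act on the right), and on subspaces by the image. *)
Definition act n (g1 g2 : 'M[C]_n) (P : subsp n) : subsp n :=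
  P *m block_mx g1 0 0 g2.

Definition same_orbit n (H1 H2 : seq (subsp n)) : Prop :=
  exists g1 g2 : 'M[C]_n,
    [/\ g1 \in unitmx, g2 \in unitmx, size H1 = size H2 &
        forall j, (j < size H1)%N ->
          (act g1 g2 (nth 0 H1 j) == nth 0 H2 j)%MS].

(* For a hinge (P_1, ..., P_k), the spaces Dom P_1 = V, Ker P_j = Dom P_(j+1) and
   Ker P_k = 0 form a decreasing flag in V whose j-th step has dimension
   rk P_j, and dually Indef P_1 = 0, Im P_j = Indef P_(j+1), Im P_k = V form an
   increasing flag; hence the ranks form a composition of n.  Choose a
   complement of Ker P_j in Dom P_j, a basis of it, and lift that basis
   through P_j to pairs (w, y).  Placing the w's and the y's in the rows
   s_j, ..., s_(j+1) - 1 (s_j the partial sums of the ranks) gives two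
   invertible matrices that move P_j onto the standard subspace spanned by
   e_i (+) e_i (s_j <= i < s_(j+1)), e_i (+) 0 (i >= s_(j+1)) and 0 (+) e_i
   (i < s_j).  So the ranks are a complete invariant, every composition
   occurs, and there are 2^(n-1) compositions of n. *)

From mathcomp Require Import all_boot all_algebra.
From mathcomp Require Import zify.
Set Implicit Arguments. Unset Strict Implicit. Unset Printing Implicit Defensive.
Import GRing.Theory.
Local Open Scope ring_scope.

Section RowMxRank.
Variable F : fieldType.

Lemma mxrank_row_mx_ker m n1 n2 (A : 'M[F]_(m, n1)) (B : 'M[F]_(m, n2)) :
  \rank (row_mx A B) = (\rank B + \rank (kermx B *m A))%N.
Proof.
have kerAB : (kermx (row_mx A B) <= kermx B)%MS.
  apply/sub_kermxP; have := mulmx_ker (row_mx A B).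
  by rewrite mul_mx_row -row_mx0 => /eq_row_mx [].
have := mxrank_mul_ker (kermx B) (row_mx A B).
rewrite mul_mx_row mulmx_ker rank_row_mx0 (capmx_idPr kerAB).
rewrite !mxrank_ker; have := rank_leq_row (row_mx A B); have := rank_leq_row B.
lia.
Qed.

Lemma mxrank_row_mxC m n1 n2 (A : 'M[F]_(m, n1)) (B : 'M[F]_(m, n2)) :
  \rank (row_mx A B) = \rank (row_mx B A).
Proof.
by rewrite -mxrank_tr tr_row_mx -addsmxE addsmxC addsmxE -tr_row_mx mxrank_tr.
Qed.

End RowMxRank.

Section Subspaces.
Variable n : nat.
Implicit Types P Q : subsp n.

Lemma KerM_sub P m (X : 'M[C]_(m, n)) :
  (X <= KerM P)%MS = (row_mx X 0 <= P)%MS.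
Proof.
by apply/row_subP/row_subP=> sub i; have := sub i;
  rewrite row_row_mx row0 KerM_spec.
Qed.

Lemma IndefM_sub P m (X : 'M[C]_(m, n)) :
  (X <= IndefM P)%MS = (row_mx 0 X <= P)%MS.
Proof.
by apply/row_subP/row_subP=> sub i; have := sub i;
  rewrite row_row_mx row0 IndefM_spec.
Qed.

Lemma row_mx_sub_DomM_ImM P m (X Y : 'M[C]_(m, n)) :
  (row_mx X Y <= P)%MS -> (X <= DomM P)%MS /\ (Y <= ImM P)%MS.
Proof.
case/submxP=> u; rewrite -[P in u *m P](hsubmxK P) mul_mx_row.
by case/eq_row_mx=> -> ->; split; apply: submxMl.
Qed.

Lemma KerM_DomM P : (KerM P <= DomM P)%MS.
Proof. by have /row_mx_sub_DomM_ImM[] : (row_mx (KerM P) 0 <= P)%MS by rewrite -KerM_sub. Qed.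

Lemma IndefM_ImM P : (IndefM P <= ImM P)%MS.
Proof. by have /row_mx_sub_DomM_ImM[] : (row_mx 0 (IndefM P) <= P)%MS by rewrite -IndefM_sub. Qed.

Lemma rank_ImM_KerM P : \rank P = (\rank (ImM P) + \rank (KerM P))%N.
Proof. by rewrite -{1}(hsubmxK P) mxrank_row_mx_ker. Qed.

Lemma rank_DomM_IndefM P : \rank P = (\rank (DomM P) + \rank (IndefM P))%N.
Proof. by rewrite -{1}(hsubmxK P) mxrank_row_mxC mxrank_row_mx_ker. Qed.

Lemma DomM_proj P : DomM P = P *m col_mx 1%:M 0.
Proof. by rewrite -{2}(hsubmxK P) mul_row_col mulmx1 mulmx0 addr0. Qed.

Lemma rk_eqmx P Q : (P == Q)%MS -> rk P = rk Q.
Proof.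
move/eqmxP=> eqPQ; rewrite /rk !DomM_proj (eqmxMr _ eqPQ).
suff /eqmxP -> : (KerM P == KerM Q)%MS by [].
by apply/rV_eqP=> v; rewrite !KerM_sub eqPQ.
Qed.

Lemma row_mx_act m (X Y : 'M[C]_(m, n)) (g1 g2 : 'M[C]_n) :
  row_mx X Y *m block_mx g1 0 0 g2 = row_mx (X *m g1) (Y *m g2).
Proof. by rewrite mul_row_block !mulmx0 addr0 add0r. Qed.

Lemma act_comp g1 g2 h1 h2 P :
  act h1 h2 (act g1 g2 P) = act (g1 *m h1) (g2 *m h2) P.
Proof. by rewrite /act -mulmxA mulmx_block !mulmx0 !mul0mx !addr0 !add0r. Qed.

Lemma act1 P : act 1%:M 1%:M P = P.
Proof. by rewrite /act -scalar_mx_block mulmx1. Qed.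

Lemma act_eqmx g1 g2 P Q : (P == Q)%MS -> (act g1 g2 P == act g1 g2 Q)%MS.
Proof. by move/eqmxP=> eqPQ; apply/eqmxP; apply: eqmxMr. Qed.

Lemma rank_act g1 g2 P : g1 \in unitmx -> g2 \in unitmx ->
  \rank (act g1 g2 P) = \rank P.
Proof.
move=> g1U g2U; rewrite /act mxrankMfree //.
by rewrite row_free_unit block_diag_mx_unit g1U.
Qed.

Lemma DomM_act g1 g2 P : DomM (act g1 g2 P) = DomM P *m g1.
Proof. by rewrite /DomM /act -{1}(hsubmxK P) row_mx_act row_mxKl. Qed.

Lemma KerM_actS g1 g2 P : (KerM P *m g1 <= KerM (act g1 g2 P))%MS.
Proof.
rewrite KerM_sub -(mul0mx _ g2) -row_mx_act submxMr //.
by rewrite -KerM_sub.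
Qed.

Lemma rank_KerM_act g1 g2 P : g1 \in unitmx -> g2 \in unitmx ->
  \rank (KerM (act g1 g2 P)) = \rank (KerM P).
Proof.
move=> g1U g2U; apply/eqP; rewrite eqn_leq; apply/andP; split.
  have := mxrankS (KerM_actS (invmx g1) (invmx g2) (act g1 g2 P)).
  by rewrite act_comp !mulmxV // act1 mxrankMfree // row_free_unit unitmx_inv.
by rewrite -(mxrankMfree (KerM P) (_ : row_free g1)) ?row_free_unit ?mxrankS ?KerM_actS.
Qed.

Lemma rk_act g1 g2 P : g1 \in unitmx -> g2 \in unitmx -> rk (act g1 g2 P) = rk P.
Proof.
move=> g1U g2U; rewrite /rk DomM_act rank_KerM_act // mxrankMfree //.
by rewrite row_free_unit.
Qed.

End Subspaces.

Section CanonicalSubspace.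
Variables (n a b : nat).
Hypotheses (le_ab : (a <= b)%N) (le_bn : (b <= n)%N).
Local Notation pid r := (pid_mx r : 'M[C]_n).
Local Notation copid r := (copid_mx r : 'M[C]_n).

Definition can_subsp : subsp n := block_mx (copid a) (pid b - pid a) 0 (pid a).

Let le_an : (a <= n)%N. Proof. exact: leq_trans le_bn. Qed.

Let pid_ab : pid a *m pid b = pid a.
Proof. by rewrite mul_pid_mx (minn_idPl le_ab) (minn_idPr le_an). Qed.

Let pid_ba : pid b *m pid a = pid a.
Proof. by rewrite mul_pid_mx (minn_idPr le_ab) (minn_idPr le_an). Qed.

Let top_row : 'M[C]_(n, n + n) := row_mx (copid a) (pid b - pid a).

Let rows_sub : (top_row <= can_subsp)%MS && (row_mx 0 (pid a) <= can_subsp)%MS.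
Proof. by rewrite -col_mx_sub -block_mxEv. Qed.

Lemma DomM_can_subsp : (DomM can_subsp :=: copid a)%MS.
Proof.
rewrite /DomM /can_subsp block_mxEh row_mxKl.
exact: eqmx_trans (eqmx_sym (addsmxE _ _)) (addsmx0 _ _).
Qed.

Lemma ImM_can_subsp : (ImM can_subsp :=: pid b)%MS.
Proof.
rewrite /ImM /can_subsp block_mxEh row_mxKr; apply/eqmxP/andP; split.
  have -> : pid b - pid a = (pid b - pid a) *m pid b.
    by rewrite mulmxBl pid_mx_id // pid_ab.
  by rewrite col_mx_sub submxMl -pid_ab submxMl.
by apply/submxP; exists (row_mx 1%:M 1%:M); rewrite mul_row_col !mul1mx subrK.
Qed.

Lemma rank_can_subsp : \rank can_subsp = n.
Proof.
apply/eqP; rewrite eqn_leq; apply/andP; split.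
  have top_rowE : top_row = copid a *m top_row.
    rewrite mul_mx_row copid_mx_id // mulmxBr !mulmxBl !mul1mx pid_ab pid_mx_id //.
    by rewrite subrr subr0.
  rewrite /can_subsp block_mxEv -addsmxE -/top_row.
  apply: leq_trans (mxrank_adds_leqif _ _) _.
  rewrite top_rowE rank_row_0mx rank_pid_mx //.
  apply: leq_trans (leq_add (mxrankM_maxl _ _) (leqnn a)) _.
  by rewrite rank_copid_mx // subnK.
rewrite rank_DomM_IndefM DomM_can_subsp rank_copid_mx //.
have /andP[_ sub] := rows_sub; rewrite -IndefM_sub in sub.
by rewrite -{1}(subnK le_an) leq_add2l -{1}(rank_pid_mx C le_an le_an) mxrankS.
Qed.

Lemma IndefM_can_subsp : (IndefM can_subsp :=: pid a)%MS.
Proof.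
have /andP[_ sub] := rows_sub; rewrite -IndefM_sub in sub.
apply/eqmx_sym/eqmxP; have [_ <-] := mxrank_leqif_eq sub.
have := rank_DomM_IndefM can_subsp.
by rewrite rank_can_subsp DomM_can_subsp rank_copid_mx // rank_pid_mx //; lia.
Qed.

Lemma KerM_can_subsp : (KerM can_subsp :=: copid b)%MS.
Proof.
have sub : (copid b <= KerM can_subsp)%MS.
  rewrite KerM_sub; have -> : row_mx (copid b) 0 = copid b *m top_row.
    rewrite mul_mx_row !mulmxBr !mulmxBl !mul1mx !mulmx1 pid_ba pid_mx_id //.
    by rewrite !subrr !subr0.
  by apply: submx_trans (submxMl _ _) _; case/andP: rows_sub.
apply/eqmx_sym/eqmxP; have [_ <-] := mxrank_leqif_eq sub.
have := rank_ImM_KerM can_subsp.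
by rewrite rank_can_subsp ImM_can_subsp rank_copid_mx // rank_pid_mx //; lia.
Qed.

Lemma rk_can_subsp : rk can_subsp = (b - a)%N.
Proof.
rewrite /rk DomM_can_subsp KerM_can_subsp !rank_copid_mx //; lia.
Qed.

End CanonicalSubspace.

Definition psum (al : seq nat) j := sumn (take j al).

Lemma psum0 al : psum al 0 = 0%N.
Proof. by rewrite /psum take0. Qed.

Lemma psumS al j : (j < size al)%N -> psum al j.+1 = (psum al j + nth 0%N al j)%N.
Proof. by move=> lt_j; rewrite /psum (take_nth 0%N lt_j) sumn_rcons. Qed.

Lemma psum_size al : psum al (size al) = sumn al.
Proof. by rewrite /psum take_size. Qed.

Lemma psum_mono al i j : (i <= j)%N -> (psum al i <= psum al j)%N.
Proof.
move=> le_ij; rewrite /psum -[take j al](cat_take_drop i) sumn_cat.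
by rewrite take_takel ?leq_addr.
Qed.

Lemma psum_le_sumn al j : (psum al j <= sumn al)%N.
Proof. by rewrite /psum -{2}(cat_take_drop j al) sumn_cat leq_addr. Qed.

Definition can_hinge n (al : seq nat) : seq (subsp n) :=
  mkseq (fun j => can_subsp n (psum al j) (psum al j.+1)) (size al).

Section CanonicalHinge.
Variables (n : nat) (al : seq nat).
Hypotheses (al_pos : all (fun a => (0 < a)%N) al) (sum_al : sumn al = n).

Let psum_le_n j : (psum al j <= n)%N.
Proof. by rewrite -sum_al psum_le_sumn. Qed.

Let psum_leS j : (psum al j <= psum al j.+1)%N.
Proof. exact: psum_mono. Qed.

Lemma nth_can_hinge j : (j < size al)%N ->
  nth 0 (can_hinge n al) j = can_subsp n (psum al j) (psum al j.+1).
Proof. by move=> lt_j; rewrite nth_mkseq. Qed.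

Lemma rk_can_hinge : map (@rk n) (can_hinge n al) = al.
Proof.
apply: (@eq_from_nth _ 0%N); rewrite size_map size_mkseq // => j lt_j.
rewrite (nth_map 0) ?size_mkseq // nth_can_hinge // rk_can_subsp //.
by rewrite psumS // addKn.
Qed.

Lemma can_hinge_is_hinge : (0 < n)%N -> is_hinge (can_hinge n al).
Proof.
move=> n_gt0; have size_gt0 : (0 < size al)%N.
  by rewrite lt0n size_eq0; apply: contraTneq n_gt0 => al0; rewrite -sum_al al0.
split.
- by rewrite -size_eq0 size_mkseq -lt0n.
- move=> P /mapP[j]; rewrite mem_iota add0n => /andP[_ lt_j] ->.
  rewrite rank_can_subsp // rk_can_subsp // psumS // addKn; split=> //.
  exact: (all_nthP 0%N al_pos).
- move=> j; rewrite size_mkseq => lt_Sj.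
  rewrite (nth_can_hinge (ltnW lt_Sj)) (nth_can_hinge lt_Sj); split; apply/eqmxP.
    exact: eqmx_trans (KerM_can_subsp _ _) (eqmx_sym (DomM_can_subsp _ _ _)).
  exact: eqmx_trans (ImM_can_subsp _ _) (eqmx_sym (IndefM_can_subsp _ _)).
- rewrite /can_hinge /mkseq -(prednK size_gt0) /= -sub1mx DomM_can_subsp //.
  by rewrite psum0 /copid_mx pid_mx_0 subr0.
- rewrite -nth_last size_mkseq nth_can_hinge ?ltn_predL // -sub1mx ImM_can_subsp //.
  by rewrite prednK // psum_size sum_al pid_mx_1.
Qed.

End CanonicalHinge.

Section Shift.
Variables (R : pzSemiRingType) (n a r : nat).
Hypothesis le_arn : (a + r <= n)%N.

Definition shift_mx : 'M[R]_(n, r) := \matrix_(i, c) ((i : nat) == a + c)%N%:R.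

Lemma pid_shift_mxE m (i : 'I_n) (c : 'I_r) :
  ((pid_mx m : 'M[R]_n) *m shift_mx) i c = (((i : nat) == a + c) && (i < m))%N%:R.
Proof.
rewrite !mxE (bigD1 i) //= (@big1 R 0 +%R) ?addr0 => [|l /negbTE ne_li].
  by rewrite !mxE eqxx /= -natrM mulnb andbC.
by rewrite !mxE eq_sym val_eqE ne_li mul0r.
Qed.

Lemma pid_shift_mx_full m : (a + r <= m)%N -> (pid_mx m : 'M[R]_n) *m shift_mx = shift_mx.
Proof.
move=> le_arm; apply/matrixP=> i c; rewrite pid_shift_mxE mxE.
by case: eqP => //= ->; rewrite (leq_trans _ le_arm) // ltn_add2l.
Qed.

Lemma pid_shift_mx_null m : (m <= a)%N -> (pid_mx m : 'M[R]_n) *m shift_mx = 0.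
Proof.
move=> le_ma; apply/matrixP=> i c; rewrite pid_shift_mxE !mxE.
by case: eqP => //= ->; rewrite ltnNge (leq_trans le_ma) ?leq_addr.
Qed.

Lemma tr_shift_mxK : shift_mx^T *m shift_mx = 1%:M.
Proof.
apply/matrixP=> c c'; rewrite !mxE.
have lt_ac : (a + c < n)%N by rewrite (leq_trans _ le_arn) // ltn_add2l.
rewrite (bigD1 (Ordinal lt_ac)) //= (@big1 R 0 +%R) ?addr0 => [|i ne_i].
  by rewrite !mxE eqxx eqn_add2l mul1r.
rewrite !mxE; case: eqP => [e|_]; last by rewrite mul0r.
by move: ne_i; rewrite -val_eqE /= e eqxx.
Qed.

End Shift.

Arguments shift_mx {R} n a r.

Section HingeStructure.
Variables (n : nat) (H : seq (subsp n)).
Hypothesis H_hinge : is_hinge H.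

Local Notation k := (size H).
Local Notation P j := (nth 0 H j).
Local Notation D j := (DomM (nth 0 H j)).
Local Notation K j := (KerM (nth 0 H j)).
Local Notation M j := (ImM (nth 0 H j)).
Local Notation I j := (IndefM (nth 0 H j)).
Local Notation s j := (psum (map (@rk n) H) j).

Lemma hinge_size_gt0 : (0 < k)%N.
Proof. by case: H_hinge; rewrite lt0n size_eq0. Qed.

Lemma hinge_rank j : (j < k)%N -> \rank (P j) = n.
Proof. by case: H_hinge => _ PH _ _ _ /(mem_nth 0)/PH[]. Qed.

Lemma hinge_rk_pos : all (fun a => (0 < a)%N) (map (@rk n) H).
Proof. by case: H_hinge => _ PH _ _ _; apply/allP=> _ /mapP[Q /PH[_ rk_gt0] ->]. Qed.

Lemma hinge_KerM_DomM j : (j.+1 < k)%N -> (K j :=: D j.+1)%MS.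
Proof. by case: H_hinge => _ _ + _ _ => /[apply] -[/eqmxP]. Qed.

Lemma hinge_ImM_IndefM j : (j.+1 < k)%N -> (M j :=: I j.+1)%MS.
Proof. by case: H_hinge => _ _ + _ _ => /[apply] -[_ /eqmxP]. Qed.

Lemma hinge_DomM_first : row_full (D 0).
Proof. by case: H_hinge => _ _ _ + _; rewrite nth0. Qed.

Lemma hinge_ImM_last : row_full (M k.-1).
Proof. by case: H_hinge => _ _ _ _; rewrite nth_last. Qed.

Lemma hinge_IndefM_first : I 0 = 0.
Proof.
apply/eqP; rewrite -mxrank_eq0; have := rank_DomM_IndefM (P 0).
rewrite hinge_rank ?hinge_size_gt0 // (eqnP hinge_DomM_first); lia.
Qed.

Lemma hinge_KerM_last : K k.-1 = 0.
Proof.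
apply/eqP; rewrite -mxrank_eq0; have := rank_ImM_KerM (P k.-1).
rewrite hinge_rank ?ltn_predL ?hinge_size_gt0 // (eqnP hinge_ImM_last); lia.
Qed.

Lemma hinge_psumS j : (j < k)%N -> s j.+1 = (s j + rk (P j))%N.
Proof. by move=> lt_j; rewrite psumS ?size_map // (nth_map 0). Qed.

Lemma rank_DomM_psum j : (j < k)%N -> (\rank (D j) + s j)%N = n.
Proof.
elim: j => [|j IHj] lt_j; first by rewrite psum0 addn0 (eqnP hinge_DomM_first).
rewrite hinge_psumS 1?ltnW // -(hinge_KerM_DomM lt_j).
have rkE : rk (P j) = (\rank (D j) - \rank (K j))%N by [].
have := mxrankS (KerM_DomM (P j)); have := IHj (ltnW lt_j); rewrite rkE; lia.
Qed.

Lemma sumn_rk_hinge : sumn (map (@rk n) H) = n.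
Proof.
have lt_k := ltn_predL k; rewrite hinge_size_gt0 in lt_k.
have rkE : rk (P k.-1) = \rank (D k.-1).
  by rewrite /rk hinge_KerM_last mxrank0 subn0.
rewrite -psum_size size_map -(prednK hinge_size_gt0) hinge_psumS // rkE.
by rewrite addnC rank_DomM_psum.
Qed.

Lemma hinge_psum_le j : (s j <= n)%N.
Proof. by have := psum_le_sumn (map (@rk n) H) j; rewrite sumn_rk_hinge. Qed.

Lemma DomM_chain i j : (i <= j)%N -> (j < k)%N -> (D j <= D i)%MS.
Proof.
elim: j => [|j IHj]; first by rewrite leqn0 => /eqP ->.
rewrite leq_eqVlt => /predU1P[-> //|le_ij lt_j].
rewrite -(hinge_KerM_DomM lt_j).
exact: submx_trans (KerM_DomM _) (IHj le_ij (ltnW lt_j)).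
Qed.

Lemma ImM_IndefM_chain l j : (l < j)%N -> (j < k)%N -> (M l <= I j)%MS.
Proof.
elim: j => [|j IHj] //; rewrite ltnS leq_eqVlt => /predU1P[-> lt_j|lt_lj lt_j].
  by rewrite (hinge_ImM_IndefM lt_j).
rewrite -(hinge_ImM_IndefM lt_j).
exact: submx_trans (IHj lt_lj (ltnW lt_j)) (IndefM_ImM _).
Qed.

Local Notation pid r := (pid_mx r : 'M[C]_n).
Local Notation copid r := (copid_mx r : 'M[C]_n).

(* Rows s_j, ..., s_(j+1) - 1 of dom_basis j form a basis of a complement of
   Ker P_j in Dom P_j (its other rows vanish), and the same rows of im_basis j
   complete them to elements of P_j. *)
Definition dom_compl j := (D j :\: K j)%MS.
Definition dom_basis j : 'M[C]_n :=
  shift_mx n (s j) (\rank (dom_compl j)) *m row_base (dom_compl j).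
Definition im_basis j : 'M[C]_n := dom_basis j *m pinvmx (D j) *m rsubmx (P j).
Definition dom_frame : 'M[C]_n := \sum_(0 <= j < k) dom_basis j.
Definition im_frame : 'M[C]_n := \sum_(0 <= j < k) im_basis j.
Definition band j : 'M[C]_n := pid (s j.+1) - pid (s j).

Lemma rank_dom_compl j : \rank (dom_compl j) = rk (P j).
Proof.
have := mxrank_cap_compl (D j) (K j).
by rewrite (capmx_idPr (KerM_DomM _)) /rk => <-; rewrite addKn.
Qed.

Lemma band_shift_mx j l : (j < k)%N -> (l < k)%N ->
  band j *m shift_mx n (s l) (\rank (dom_compl l)) =
  if l == j then shift_mx n (s l) (\rank (dom_compl l)) else 0.
Proof.
move=> lt_j lt_l; have le_psum := psum_mono (map (@rk n) H).
have e_l : (s l + \rank (dom_compl l))%N = s l.+1.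
  by rewrite rank_dom_compl hinge_psumS.
rewrite /band mulmxBl; case: (ltngtP l j) => [lt_lj|lt_jl|<-].
- by rewrite !pid_shift_mx_full ?subrr // e_l le_psum // ltnW.
- by rewrite !pid_shift_mx_null ?subrr // le_psum // ltnW.
- by rewrite pid_shift_mx_full ?pid_shift_mx_null ?subr0 ?e_l.
Qed.

Lemma band_dom_basis j l : (j < k)%N -> (l < k)%N ->
  band j *m dom_basis l = if l == j then dom_basis l else 0.
Proof. by move=> lt_j lt_l; rewrite mulmxA band_shift_mx //; case: eqP; rewrite ?mul0mx. Qed.

Lemma band_im_basis j l : (j < k)%N -> (l < k)%N ->
  band j *m im_basis l = if l == j then im_basis l else 0.
Proof.
move=> lt_j lt_l; rewrite /im_basis (mulmxA (band j)) (mulmxA (band j)).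
by rewrite band_dom_basis //; case: eqP; rewrite ?mul0mx.
Qed.

Lemma band_sum (F : nat -> 'M[C]_n) j : (j < k)%N ->
    (forall l, (l < k)%N -> band j *m F l = if l == j then F l else 0) ->
  band j *m \sum_(0 <= l < k) F l = F j.
Proof.
move=> lt_j bandF; rewrite mulmx_sumr.
under eq_big_nat => l /andP[_ lt_l] do rewrite bandF //.
by rewrite -big_mkcond big_nat1_eq lt_j.
Qed.

Lemma band_dom_frame j : (j < k)%N -> band j *m dom_frame = dom_basis j.
Proof. by move=> lt_j; apply: band_sum => // l; apply: band_dom_basis. Qed.

Lemma band_im_frame j : (j < k)%N -> band j *m im_frame = im_basis j.
Proof. by move=> lt_j; apply: band_sum => // l; apply: band_im_basis. Qed.

Lemma pid_psum_band j : pid (s j) = \sum_(0 <= l < j) band l.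
Proof. by rewrite telescope_sumr // psum0 pid_mx_0 subr0. Qed.

Lemma copid_psum_band j : (j <= k)%N -> copid (s j) = \sum_(j <= l < k) band l.
Proof.
move=> le_jk; rewrite telescope_sumr //.
by rewrite -(size_map (@rk n)) psum_size sumn_rk_hinge pid_mx_1.
Qed.

Lemma dom_basis_sub j : (dom_basis j <= D j)%MS.
Proof.
apply: submx_trans (submxMl _ _) _.
by rewrite eq_row_base diffmxSl.
Qed.

Lemma dom_im_basis_sub j : (row_mx (dom_basis j) (im_basis j) <= P j)%MS.
Proof.
rewrite /im_basis -{1}(mulmxKpV (dom_basis_sub j)) -mul_mx_row.
by rewrite [row_mx _ _]hsubmxK submxMl.
Qed.

Lemma dom_compl_sub_basis j : (j < k)%N -> (dom_compl j <= dom_basis j)%MS.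
Proof.
move=> lt_j; have fits : (s j + \rank (dom_compl j) <= n)%N.
  by rewrite rank_dom_compl -hinge_psumS ?hinge_psum_le.
rewrite -eq_row_base -[row_base _]mul1mx -(tr_shift_mxK C fits) -mulmxA.
exact: submxMl.
Qed.

Lemma copid_dom_frame_sub j : (j < k)%N -> (copid (s j) *m dom_frame <= D j)%MS.
Proof.
move=> lt_j; rewrite copid_psum_band 1?ltnW // mulmx_suml big_nat_cond.
apply: summx_sub => l /andP[/andP[le_jl lt_l] _].
by rewrite band_dom_frame //; apply: submx_trans (dom_basis_sub l) (DomM_chain le_jl lt_l).
Qed.

Lemma copid_dom_frame_sub_KerM j : (j < k)%N -> (copid (s j.+1) *m dom_frame <= K j)%MS.
Proof.
move=> lt_j; have [lt_Sj | le_kSj] := ltnP j.+1 k.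
  by rewrite (hinge_KerM_DomM lt_Sj) copid_dom_frame_sub.
have -> : j.+1 = k by apply/eqP; rewrite eqn_leq lt_j.
by rewrite copid_psum_band // big_geq // mul0mx sub0mx.
Qed.

Lemma pid_im_frame_sub j : (j < k)%N -> (pid (s j) *m im_frame <= I j)%MS.
Proof.
move=> lt_j; rewrite pid_psum_band mulmx_suml big_nat_cond.
apply: summx_sub => l /andP[/andP[_ lt_lj] _].
rewrite band_im_frame ?(ltn_trans lt_lj) //.
exact: submx_trans (submxMl _ _) (ImM_IndefM_chain lt_lj lt_j).
Qed.

Lemma DomM_sub_basis_KerM j : (j < k)%N -> (D j <= dom_basis j + K j)%MS.
Proof.
move=> lt_j; rewrite -{1}(addsmx_diff_cap_eq (D j) (K j)).
by rewrite addsmxS ?dom_compl_sub_basis ?capmxSr.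
Qed.

Lemma ImM_sub_basis_IndefM j : (j < k)%N -> (M j <= im_basis j + I j)%MS.
Proof.
move=> lt_j; case/sub_addsmxP: (DomM_sub_basis_KerM lt_j) => -[u1 u2] /= eL.
have sub_I : (rsubmx (P j) - u1 *m im_basis j <= I j)%MS.
  rewrite IndefM_sub; have -> : row_mx 0 (rsubmx (P j) - u1 *m im_basis j) =
      P j - u1 *m row_mx (dom_basis j) (im_basis j) - row_mx (u2 *m K j) 0.
    rewrite -[X in X - _ - _](hsubmxK (P j)) mul_mx_row !opp_row_mx !add_row_mx.
    by rewrite -/(DomM _) eL addrAC addrK subrr subr0.
  rewrite -addrA -opprD; apply: addmx_sub => //; rewrite eqmx_opp.
  apply: addmx_sub; first exact: submx_trans (submxMl _ _) (dom_im_basis_sub j).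
  by rewrite -KerM_sub submxMl.
by rewrite -[M j](addrNK (u1 *m im_basis j)) addrC addmx_sub_adds ?submxMl.
Qed.

Lemma DomM_sub_dom_frame j : (j < k)%N -> (D j <= dom_frame)%MS.
Proof.
have sub_frame l : (l < k)%N -> (dom_basis l <= dom_frame)%MS.
  by move=> lt_l; rewrite -band_dom_frame ?submxMl.
move=> lt_j; move def_t: (k - j)%N => t.
elim: t j def_t lt_j => [|t IHt] j def_t lt_j; first lia.
apply: submx_trans (DomM_sub_basis_KerM lt_j) _; rewrite addsmx_sub sub_frame //=.
have [lt_Sj | le_kSj] := ltnP j.+1 k.
  by rewrite (hinge_KerM_DomM lt_Sj) IHt //; lia.
have -> : j = k.-1 by lia.
by rewrite hinge_KerM_last sub0mx.
Qed.

Lemma ImM_sub_im_frame j : (j < k)%N -> (M j <= im_frame)%MS.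
Proof.
elim: j => [|j IHj] lt_j; apply: submx_trans (ImM_sub_basis_IndefM lt_j) _;
  rewrite addsmx_sub -band_im_frame // submxMl //=.
  by rewrite hinge_IndefM_first sub0mx.
by rewrite -(hinge_ImM_IndefM lt_j) IHj // ltnW.
Qed.

Lemma dom_frame_unit : dom_frame \in unitmx.
Proof.
rewrite -row_full_unit -sub1mx; apply: submx_trans (DomM_sub_dom_frame hinge_size_gt0).
by rewrite sub1mx hinge_DomM_first.
Qed.

Lemma im_frame_unit : im_frame \in unitmx.
Proof.
have lt_k : (k.-1 < k)%N by rewrite ltn_predL hinge_size_gt0.
rewrite -row_full_unit -sub1mx; apply: submx_trans (ImM_sub_im_frame lt_k).
by rewrite sub1mx hinge_ImM_last.
Qed.

Lemma act_frames_can_subsp j : (j < k)%N ->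
  (act dom_frame im_frame (can_subsp n (s j) (s j.+1)) == P j)%MS.
Proof.
move=> lt_j; have le_psum : (s j <= s j.+1)%N by apply: psum_mono.
have sub : (act dom_frame im_frame (can_subsp n (s j) (s j.+1)) <= P j)%MS.
  rewrite /act /can_subsp mulmx_block !mulmx0 !mul0mx !addr0 !add0r.
  rewrite block_mxEv col_mx_sub -IndefM_sub pid_im_frame_sub // andbT.
  have -> : copid (s j) = copid (s j.+1) + band j by rewrite /band addrA subrK.
  rewrite mulmxDl band_dom_frame // band_im_frame // -[im_basis j]add0r -add_row_mx.
  apply: addmx_sub (dom_im_basis_sub j).
  by rewrite -KerM_sub copid_dom_frame_sub_KerM.
apply/andP; split=> //; have [_ <-] := mxrank_leqif_sup sub.
by rewrite rank_act ?dom_frame_unit ?im_frame_unit // rank_can_subsp ?hinge_psum_le // hinge_rank.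
Qed.

Lemma hinge_same_orbit_can_hinge : same_orbit (can_hinge n (map (@rk n) H)) H.
Proof.
exists dom_frame, im_frame; split; rewrite ?dom_frame_unit ?im_frame_unit //.
  by rewrite size_mkseq size_map.
by move=> j; rewrite size_mkseq size_map => lt_j; rewrite nth_can_hinge ?size_map ?act_frames_can_subsp.
Qed.

End HingeStructure.

Section Orbits.
Variable n : nat.
Implicit Types H : seq (subsp n).

Lemma same_orbit_rk H1 H2 : same_orbit H1 H2 -> map (@rk n) H1 = map (@rk n) H2.
Proof.
case=> g1 [g2 [g1U g2U eq_size actH]]; apply: (@eq_from_nth _ 0%N).
  by rewrite !size_map.
move=> j; rewrite size_map => lt_j.
by rewrite !(nth_map 0) -?eq_size // -(rk_eqmx (actH j lt_j)) rk_act.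
Qed.

Lemma same_orbit_sym H1 H2 : same_orbit H1 H2 -> same_orbit H2 H1.
Proof.
case=> g1 [g2 [g1U g2U eq_size actH]].
exists (invmx g1), (invmx g2); split; rewrite ?unitmx_inv // => j.
rewrite -eq_size => /actH /(act_eqmx (invmx g1) (invmx g2)).
by rewrite act_comp !mulmxV // act1 => /eqmxP/eqmx_sym/eqmxP.
Qed.

Lemma same_orbit_trans H1 H2 H3 :
  same_orbit H1 H2 -> same_orbit H2 H3 -> same_orbit H1 H3.
Proof.
case=> g1 [g2 [g1U g2U eq_size12 actH12]] [h1 [h2 [h1U h2U eq_size23 actH23]]].
exists (g1 *m h1), (g2 *m h2); split.
- by rewrite unitmx_mul g1U.
- by rewrite unitmx_mul g2U.
- by rewrite eq_size12.
move=> j lt_j; have lt_j2 : (j < size H2)%N by rewrite -eq_size12.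
rewrite -act_comp; apply/eqmxP.
exact: eqmx_trans (eqmxP (act_eqmx h1 h2 (actH12 j lt_j))) (eqmxP (actH23 j lt_j2)).
Qed.

Lemma hinge_same_orbitP H1 H2 : is_hinge H1 -> is_hinge H2 ->
  same_orbit H1 H2 <-> map (@rk n) H1 = map (@rk n) H2.
Proof.
move=> hinge1 hinge2; split; first exact: same_orbit_rk.
move=> eq_rk; apply: same_orbit_trans (same_orbit_sym (hinge_same_orbit_can_hinge hinge1)) _.
by rewrite eq_rk; apply: hinge_same_orbit_can_hinge.
Qed.

End Orbits.

Definition incr_head (c : seq nat) := if c is a :: t then a.+1 :: t else [::].

(* The compositions of m.+1, split according to whether the first part is 1. *)
Fixpoint compositionsS (m : nat) : seq (seq nat) :=
  if m is m'.+1 then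
    [seq 1%N :: c | c <- compositionsS m'] ++ map incr_head (compositionsS m')
  else [:: [:: 1%N]].

Lemma size_compositionsS m : size (compositionsS m) = (2 ^ m)%N.
Proof. by elim: m => //= m IHm; rewrite size_cat !size_map IHm expnS mul2n addnn. Qed.

Lemma mem_compositionsS m c :
  (c \in compositionsS m) = all (fun a => (0 < a)%N) c && (sumn c == m.+1).
Proof.
elim: m c => [|m IHm] c /=.
  rewrite inE; case: c => [|a [|b t]] //=.
    by case: a => [|[]].
  by rewrite eqseq_cons andbF; apply/esym/andP=> -[/and3P[a_gt0 b_gt0 _] /eqP]; lia.
rewrite mem_cat; apply/orP/andP=> [[]|[]].
- by case/mapP=> d; rewrite IHm => /andP[pos_d /eqP sum_d] ->; rewrite /= pos_d sum_d.
- case/mapP=> -[|a t]; rewrite IHm => /andP[//= /andP[a_gt0 pos_t] /eqP sum_at] ->.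
  by rewrite /= pos_t addSn sum_at.
case: c => [|[|[|a]] t] //= pos_t /eqP sum_t; [left | right].
  by apply/mapP; exists t; rewrite // IHm pos_t; apply/eqP; lia.
by apply/mapP; exists (a.+1 :: t); rewrite // IHm /= pos_t; apply/eqP; lia.
Qed.

Lemma uniq_compositionsS m : uniq (compositionsS m).
Proof.
elim: m => //= m IHm; rewrite cat_uniq map_inj_uniq => [|c d [] //].
rewrite IHm map_inj_in_uniq ?IHm ?andbT //.
  apply/hasPn=> _ /mapP[c c_in ->]; apply/mapP=> -[d _].
  by case: c c_in => [|[|a] t] //; rewrite mem_compositionsS.
move=> [|a t] [|b u]; rewrite !mem_compositionsS //=.
by move=> _ _ [-> ->].
Qed.

Theorem lemma2p3 (n : nat) (n_gt0 : (0 < n)%N) :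
  (* there are exactly 2^(n-1) orbits: a list of 2^(n-1) hinges such that
     every hinge lies in the orbit of exactly one of them *)
  (exists L : seq (seq (subsp n)),
     [/\ size L = (2 ^ (n - 1))%N,
         (forall H, H \in L -> is_hinge H) &
         (forall H, is_hinge H ->
            exists! i : nat, (i < size L)%N /\ same_orbit (nth [::] L i) H)]) /\
  (* two hinges are in the same orbit iff k and (rk P_1, ..., rk P_k) agree *)
  (forall H1 H2 : seq (subsp n), is_hinge H1 -> is_hinge H2 ->
     (same_orbit H1 H2 <-> map (@rk n) H1 = map (@rk n) H2)) /\
  (* every tuple of positive integers summing to n occurs *)
  (forall alpha : seq nat, all (fun a => (0 < a)%N) alpha -> sumn alpha = n ->
     exists H : seq (subsp n), is_hinge H /\ map (@rk n) H = alpha).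
Proof.
have mem_comp (al : seq nat) : (al \in compositionsS n.-1) = all (fun a => 0 < a)%N al && (sumn al == n).
  by rewrite mem_compositionsS prednK.
split; last split.
- exists (map (can_hinge n) (compositionsS n.-1)); split.
  + by rewrite size_map size_compositionsS subn1.
  + move=> _ /mapP[al + ->]; rewrite mem_comp => /andP[al_pos /eqP sum_al].
    exact: can_hinge_is_hinge.
  move=> H H_hinge; have al_in : map (@rk n) H \in compositionsS n.-1.
    by rewrite mem_comp hinge_rk_pos // sumn_rk_hinge // eqxx.
  exists (index (map (@rk n) H) (compositionsS n.-1)); rewrite size_map; split.
    rewrite index_mem al_in (nth_map [::]) ?index_mem // nth_index //.
    by split=> //; apply: hinge_same_orbit_can_hinge.
  move=> i [lt_i]; rewrite (nth_map [::]) // => /same_orbit_rk.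
  have := mem_nth [::] lt_i; rewrite mem_comp => /andP[_ /eqP sum_al].
  by rewrite rk_can_hinge // => <-; rewrite index_uniq ?uniq_compositionsS.
- exact: hinge_same_orbitP.
move=> al al_pos sum_al; exists (can_hinge n al).
by split; [apply: can_hinge_is_hinge | apply: rk_can_hinge].
Qed.
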